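(* Let $G$ be a number all of whose options are numbers, and let $H$ be any game with $L(H)\neq\emptyset$. Then every Left option $G^L\in L(G)$ is strictly dominated in $G\mathbin{:}H$, i.e. there is a Left option $K$ of $G\mathbin{:}H$ with $G^L<K$.
   Context: Games are short normal-play combinatorial games, written $G\cong\{L(G)\mid R(G)\}$ with $L(G)$, $R(G)$ the Left and Right options; $<,\le,=$ denote the usual order and equality of game values. The ordinal sum is defined recursively by $G\mathbin{:}H\cong\{L(G),\,G\mathbin{:}L(H)\mid R(G),\,G\mathbin{:}R(H)\}$ (moving in $H$ keeps $G$; moving in $G$ discards $H$). A number is a game $G$ with $G^L<G<G^R$ for all $G^L\in L(G)$, $G^R\in R(G)$ (short numbers have values in the dyadic rationals). *)

From Stdlib Require Import List Arith.
Import ListNotations.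

Inductive game : Type := Game : list game -> list game -> game.

Definition Lopts (g : game) : list game := let 'Game l _ := g in l.
Definition Ropts (g : game) : list game := let 'Game _ r := g in r.

(* birthday-like size, used only as fuel bound for the order *)
Fixpoint gsize (g : game) : nat :=
  match g with
  | Game l r => S (fold_right (fun x acc => gsize x + acc) 0 l
                   + fold_right (fun x acc => gsize x + acc) 0 r)
  end.

(* Computed with fuel; gsize G + gsize H strictly decreases on each recursive
   call, so the fuel gsize G + gsize H suffices. *)
Fixpoint le_fuel (n : nat) (g h : game) : bool :=
  match n with
  | 0 => true
  | S n' =>
      forallb (fun gl => negb (le_fuel n' h gl)) (Lopts g)
      && forallb (fun hr => negb (le_fuel n' hr g)) (Ropts h)
  end.

Definition gle (g h : game) : Prop := le_fuel (gsize g + gsize h) g h = true.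
Definition glt (g h : game) : Prop := gle g h /\ ~ gle h g.

Fixpoint osum (g h : game) : game :=
  match h with
  | Game hl hr => Game (Lopts g ++ map (osum g) hl) (Ropts g ++ map (osum g) hr)
  end.

Definition is_number (g : game) : Prop :=
  (forall gl, In gl (Lopts g) -> glt gl g) /\
  (forall gr, In gr (Ropts g) -> glt g gr).

(* Take K := G : X for a Left option X of H.  As G^L is a Left option of K,
   K <= G^L fails.  Conversely G^L <= K: a Left option of G^L at or above K
   would put K below G^L; a Right option of G below G^L <= G would lie below G;
   and G : X^R cannot lie below G^L, which is one of its Left options.  Only
   G^L <= G and (G^L)^L <= G^L are used, not the other number hypotheses. *)

From Stdlib Require Import List Bool Lia.

Lemma gsize_le_sum (x : game) (l : list game) :
  In x l -> gsize x <= fold_right (fun y acc => gsize y + acc) 0 l.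
Proof.
  induction l as [|y l IHl]; simpl; [tauto|].
  intros [-> | Hx]; [lia | specialize (IHl Hx); lia].
Qed.

Lemma gsize_Lopts (g x : game) : In x (Lopts g) -> gsize x < gsize g.
Proof. destruct g as [l r]; simpl; intros Hx; apply gsize_le_sum in Hx; lia. Qed.

Lemma gsize_Ropts (g x : game) : In x (Ropts g) -> gsize x < gsize g.
Proof. destruct g as [l r]; simpl; intros Hx; apply gsize_le_sum in Hx; lia. Qed.

Lemma gsize_pos (g : game) : 0 < gsize g.
Proof. destruct g; simpl; lia. Qed.

Lemma forallb_ext_in {A : Type} (f g : A -> bool) (l : list A) :
  (forall x, In x l -> f x = g x) -> forallb f l = forallb g l.
Proof.
  induction l as [|a l IHl]; simpl; intros Hfg; [reflexivity|].
  rewrite Hfg, IHl by auto; reflexivity.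
Qed.

Lemma le_fuel_indep (n m : nat) (g h : game) :
  gsize g + gsize h <= n -> gsize g + gsize h <= m ->
  le_fuel n g h = le_fuel m g h.
Proof.
  revert m g h; induction n as [|n IH]; intros m g h Hn Hm;
    [pose proof (gsize_pos g); lia|].
  destruct m as [|m]; [pose proof (gsize_pos g); lia|]; simpl; f_equal.
  - apply forallb_ext_in; intros x Hx; f_equal.
    pose proof (gsize_Lopts g x Hx); apply IH; lia.
  - apply forallb_ext_in; intros x Hx; f_equal.
    pose proof (gsize_Ropts h x Hx); apply IH; lia.
Qed.

Lemma gle_unfold (g h : game) :
  gle g h <->
  (forall gl, In gl (Lopts g) -> ~ gle h gl) /\
  (forall hr, In hr (Ropts h) -> ~ gle hr g).
Proof.
  unfold gle; destruct (gsize g + gsize h) as [|n] eqn:Hn;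
    [pose proof (gsize_pos g); lia|].
  simpl; rewrite andb_true_iff, !forallb_forall.
  assert (HL : forall x, In x (Lopts g) ->
            le_fuel n h x = le_fuel (gsize h + gsize x) h x).
  { intros x Hx; pose proof (gsize_Lopts g x Hx); apply le_fuel_indep; lia. }
  assert (HR : forall x, In x (Ropts h) ->
            le_fuel n x g = le_fuel (gsize x + gsize g) x g).
  { intros x Hx; pose proof (gsize_Ropts h x Hx); apply le_fuel_indep; lia. }
  split; intros [Hg Hh]; split; intros x Hx.
  - specialize (Hg x Hx); rewrite HL, negb_true_iff in Hg by exact Hx; congruence.
  - specialize (Hh x Hx); rewrite HR, negb_true_iff in Hh by exact Hx; congruence.
  - rewrite HL, negb_true_iff by exact Hx; apply not_true_is_false, Hg, Hx.
  - rewrite HR, negb_true_iff by exact Hx; apply not_true_is_false, Hh, Hx.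
Qed.

Lemma gle_refl (g : game) : gle g g.
Proof.
  remember (gsize g) as n eqn:Hn; revert g Hn.
  induction n as [n IH] using Wf_nat.lt_wf_ind; intros g Hn.
  apply gle_unfold; split; intros x Hx Hle; apply gle_unfold in Hle as [HgL HgR].
  - apply (HgL x Hx), (IH (gsize x)); [pose proof (gsize_Lopts g x Hx); lia | reflexivity].
  - apply (HgR x Hx), (IH (gsize x)); [pose proof (gsize_Ropts g x Hx); lia | reflexivity].
Qed.

Lemma gle_trans (a b c : game) : gle a b -> gle b c -> gle a c.
Proof.
  remember (gsize a + gsize b + gsize c) as n eqn:Hn; revert a b c Hn.
  induction n as [n IH] using Wf_nat.lt_wf_ind; intros a b c Hn Hab Hbc.
  pose proof Hab as Hab'; pose proof Hbc as Hbc'.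
  apply gle_unfold in Hab as [HaL _]; apply gle_unfold in Hbc as [_ HcR].
  apply gle_unfold; split.
  - intros x Hx Hcx; apply (HaL x Hx).
    pose proof (gsize_Lopts a x Hx); eapply IH; [| reflexivity | exact Hbc' | exact Hcx]; lia.
  - intros x Hx Hxa; apply (HcR x Hx).
    pose proof (gsize_Ropts c x Hx); eapply IH; [| reflexivity | exact Hxa | exact Hab']; lia.
Qed.

Lemma Lopt_not_ge (g gl : game) : In gl (Lopts g) -> ~ gle g gl.
Proof.
  intros Hgl Hle; apply gle_unfold in Hle as [HgL _].
  exact (HgL gl Hgl (gle_refl gl)).
Qed.

Lemma Ropt_not_le (g gr : game) : In gr (Ropts g) -> ~ gle gr g.
Proof.
  intros Hgr Hle; apply gle_unfold in Hle as [_ HgR].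
  exact (HgR gr Hgr (gle_refl gr)).
Qed.

Lemma osum_Lopts_base (g x gl : game) : In gl (Lopts g) -> In gl (Lopts (osum g x)).
Proof. destruct x; simpl; intros; apply in_or_app; auto. Qed.

Lemma osum_Lopts_osum (g h x : game) :
  In x (Lopts h) -> In (osum g x) (Lopts (osum g h)).
Proof. destruct h; simpl; intros; apply in_or_app; right; apply in_map; assumption. Qed.

Lemma Lopt_lt_osum (g gl x : game) :
  In gl (Lopts g) -> gle gl g -> (forall y, In y (Lopts gl) -> gle y gl) ->
  glt gl (osum g x).
Proof.
  intros Hgl Hgl_le HglL.
  split; [| apply Lopt_not_ge, osum_Lopts_base, Hgl].
  apply gle_unfold; split.
  - intros y Hy Hxy.
    exact (Lopt_not_ge _ _ (osum_Lopts_base g x gl Hgl) (gle_trans _ _ _ Hxy (HglL y Hy))).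
  - destruct x as [xl xr]; simpl; intros r Hr Hle.
    apply in_app_or in Hr as [Hr | Hr].
    + exact (Ropt_not_le g r Hr (gle_trans _ _ _ Hle Hgl_le)).
    + apply in_map_iff in Hr as [y [<- _]].
      exact (Lopt_not_ge _ _ (osum_Lopts_base g y gl Hgl) Hle).
Qed.

Theorem proposition2p6 (G H : game) :
  is_number G ->
  (forall X, In X (Lopts G) -> is_number X) ->
  (forall X, In X (Ropts G) -> is_number X) ->
  Lopts H <> nil ->
  forall GL, In GL (Lopts G) ->
    exists K, In K (Lopts (osum G H)) /\ glt GL K.
Proof.
  intros [HG_L _] HGL_num _ HH GL HGL.
  destruct (Lopts H) as [|X hl] eqn:HHL; [congruence|].
  exists (osum G X); split.
  - apply osum_Lopts_osum; rewrite HHL; left; reflexivity.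
  - apply Lopt_lt_osum; [exact HGL | apply HG_L, HGL |].
    intros y Hy; apply (HGL_num GL HGL), Hy.
Qed.
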